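(* Suppose the reals $e^1_{j,n},e^2_{j,n},v_{j,n}$ ($0\le j\le J$, $1\le n\le N$) and $d^1_{j,n},d^2_{j,n}$ ($0\le j\le J$, $1\le n\le N-1$) satisfy constraints (ii) and (iii) of the context. Let $\bar e^1_n,\bar e^2_n,\bar v_n$ be the linear interpolations on $[0,x_J]$ of $(e^1_{j,n})_j,(e^2_{j,n})_j,(v_{j,n})_j$, and $\tilde d^1_n,\tilde d^2_n$ the mixed interpolations of $(d^1_{j,n})_j,(d^2_{j,n})_j$. Then for all $1\le n\le N-1$ and all $0\le x,y\le x_J$, \[ \bar e^1_n(x)+\bar e^2_{n+1}(y)+(y-x)\tilde d^1_n(x)\ge0, \] \[ \bar e^1_n(x)+\bar e^2_{n+1}(y)+(y-x)\tilde d^2_n(x)-\bar v_n(x)+\bar v_{n+1}(y)\ge0. \]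
   Context: Let $0=x_0<x_1<\dots<x_J$ and $N\ge1$. Constraints: (ii) $e^1_{j,n}+e^2_{k,n+1}+(x_k-x_j)d^1_{j,n}\ge0$ and (iii) $e^1_{j,n}+e^2_{k,n+1}+(x_k-x_j)d^2_{j,n}-v_{j,n}+v_{k,n+1}\ge0$ for all $0\le j,k\le J$, $1\le n\le N-1$. Linear interpolation of $(h_j)_{0\le j\le J}$: $\bar h(x)=\frac{x_{j+1}-x}{x_{j+1}-x_j}h_j+\frac{x-x_j}{x_{j+1}-x_j}h_{j+1}$ for $x_j\le x\le x_{j+1}$, $0\le j<J$. Mixed interpolation: for $\delta\in\{1,2\}$ and $1\le n\le N-1$ let $u^1_{j,n}=\frac{e^1_{j+1,n}-e^1_{j,n}}{x_{j+1}-x_j}$ and $u^2_{j,n}=\frac{(e^1_{j+1,n}-v_{j+1,n})-(e^1_{j,n}-v_{j,n})}{x_{j+1}-x_j}$. Define $\tilde d^\delta_n(x_j)=d^\delta_{j,n}$ and, for $x\in(x_j,x_{j+1})$: $\tilde d^\delta_n(x)=d^\delta_{j,n}$ if $d^\delta_{j,n}\le u^\delta_{j,n}$; $\tilde d^\delta_n(x)=d^\delta_{j+1,n}$ if $d^\delta_{j,n}>u^\delta_{j,n}$ and $d^\delta_{j+1,n}\ge u^\delta_{j,n}$; $\tilde d^\delta_n(x)=u^\delta_{j,n}$ if $d^\delta_{j+1,n}<u^\delta_{j,n}<d^\delta_{j,n}$. *)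

From mathcomp Require Import all_boot all_order all_algebra.
Set Implicit Arguments. Unset Strict Implicit. Unset Printing Implicit Defensive.
Import Order.TTheory GRing.Theory Num.Theory.
Local Open Scope ring_scope.

Section Interp.
Variable R : realFieldType.

Fixpoint seg_aux (xs : nat -> R) (x : R) (j : nat) : nat :=
  match j with
  | 0 => 0%N
  | j'.+1 => if xs j <= x then j else seg_aux xs x j'
  end.

(* Index j < J of the grid cell [x_j, x_{j+1}] containing x (for 0 <= x <= x_J). *)
Definition seg (J : nat) (xs : nat -> R) (x : R) : nat := seg_aux xs x J.-1.

Definition lin_interp (J : nat) (xs : nat -> R) (h : nat -> R) (x : R) : R :=
  let j := seg J xs x in
  if x == xs j then h j
  else if x == xs j.+1 then h j.+1
  else (xs j.+1 - x) / (xs j.+1 - xs j) * h j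
       + (x - xs j) / (xs j.+1 - xs j) * h j.+1.

(* Mixed interpolation of (d_j)_j with cell slopes u j (u j = u^delta_{j,n}). *)
Definition mixed_interp (J : nat) (xs : nat -> R) (d u : nat -> R) (x : R) : R :=
  let j := seg J xs x in
  if x == xs j then d j
  else if x == xs j.+1 then d j.+1
  else if d j <= u j then d j
  else if (d j > u j) && (d j.+1 >= u j) then d j.+1
  else u j (* remaining case: d j.+1 < u j < d j *).

Definition u1 (xs : nat -> R) (e1 : nat -> nat -> R) (n j : nat) : R :=
  (e1 j.+1 n - e1 j n) / (xs j.+1 - xs j).

Definition u2 (xs : nat -> R) (e1 v : nat -> nat -> R) (n j : nat) : R :=
  ((e1 j.+1 n - v j.+1 n) - (e1 j n - v j n)) / (xs j.+1 - xs j).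

End Interp.

(* On a grid cell [p, q] the linear interpolant is the convex combination
   with weights (q - x)/(q - p) and (x - p)/(q - p), and this combination
   reproduces affine functions.  Since the slope is constant on each open cell,
   both left-hand sides are therefore convex combinations of their values at
   grid points in x and in y.  In y this reduces the claim to constraint (ii)
   (resp. (iii)).  In x, the mixed slope D keeps x |-> e(x) + (x_k - x) D
   nonnegative at both ends of the cell: D = d_j (resp. d_{j+1}) only gains
   (q - p)(u - d_j) >= 0 (resp. (q - p)(d_{j+1} - u)) at the far end, and
   D = u makes it constant, the grid point x_k lying outside the open cell.
   Constraint (iii) is constraint (ii) for e^1 - v and e^2 + v. *)
From mathcomp Require Import all_boot all_order all_algebra.
From mathcomp Require Import ring lra zify.
Set Implicit Arguments. Unset Strict Implicit. Unset Printing Implicit Defensive.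
Import Order.TTheory GRing.Theory Num.Theory.
Local Open Scope ring_scope.

Section CellInterpolation.
Variable R : realFieldType.
Implicit Types p q a b c m x : R.

Definition cell_interp p q a b x : R :=
  (q - x) / (q - p) * a + (x - p) / (q - p) * b.

Lemma cell_interp_ge0 p q a b x :
  p < q -> p <= x -> x <= q -> 0 <= a -> 0 <= b -> 0 <= cell_interp p q a b x.
Proof.
move=> pq px xq a0 b0; have qp0 : 0 < q - p by rewrite subr_gt0.
by rewrite addr_ge0 // mulr_ge0 // divr_ge0 // ?subr_ge0 // ltW.
Qed.

Lemma cell_interp_affine p q a b c m x : p != q ->
  cell_interp p q a b x + (c + m * x) =
  cell_interp p q (a + (c + m * p)) (b + (c + m * q)) x.
Proof. by move=> pq; rewrite /cell_interp; field; rewrite subr_eq0 eq_sym. Qed.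

Definition mixed_slope (d0 d1 u : R) : R :=
  if d0 <= u then d0 else if (d0 > u) && (d1 >= u) then d1 else u.

Lemma mixed_slope_ends p q E0 E1 c k d0 d1 :
  p < q -> k <= p \/ q <= k ->
  0 <= E0 + c + (k - p) * d0 -> 0 <= E1 + c + (k - q) * d1 ->
  let D := mixed_slope d0 d1 ((E1 - E0) / (q - p)) in
  0 <= E0 + c + (k - p) * D /\ 0 <= E1 + c + (k - q) * D.
Proof.
move=> pq k_out end_p end_q; have h0 : 0 < q - p by rewrite subr_gt0.
rewrite /mixed_slope; set u := (E1 - E0) / (q - p).
have E1E : E1 = E0 + u * (q - p) by rewrite /u divfK ?gt_eqF //; ring.
case: (leP d0 u) => [d0u|ud0].
  have : 0 <= (q - p) * (u - d0) by rewrite mulr_ge0 ?subr_ge0 // ltW.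
  split=> //; rewrite E1E; lra.
rewrite /=; case: (leP u d1) => [ud1|d1u].
  have : 0 <= (q - p) * (d1 - u) by rewrite mulr_ge0 ?subr_ge0 // ltW.
  split=> //; rewrite E1E in end_q; lra.
suff : 0 <= E0 + c + (k - p) * u by split=> //; rewrite E1E; lra.
case: k_out => [kp|qk].
  have : 0 <= (p - k) * (d0 - u) by rewrite mulr_ge0 ?subr_ge0 // ltW.
  lra.
have : 0 <= (k - q) * (u - d1) by rewrite mulr_ge0 ?subr_ge0 // ltW.
rewrite E1E in end_q; lra.
Qed.

End CellInterpolation.

Lemma lin_interpD (R : realFieldType) J xs (h1 h2 : nat -> R) x :
  lin_interp J xs (fun j => h1 j + h2 j) x = lin_interp J xs h1 x + lin_interp J xs h2 x.
Proof. by rewrite /lin_interp; case: ifP => _ //; case: ifP => _ //; ring. Qed.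

Lemma lin_interpB (R : realFieldType) J xs (h1 h2 : nat -> R) x :
  lin_interp J xs (fun j => h1 j - h2 j) x = lin_interp J xs h1 x - lin_interp J xs h2 x.
Proof. by rewrite /lin_interp; case: ifP => _ //; case: ifP => _ //; ring. Qed.

Section Grid.
Variables (R : realFieldType) (J : nat) (xs : nat -> R).
Hypotheses (xs0 : xs 0%N = 0) (xs_incr : forall j, (j < J)%N -> xs j < xs j.+1).

Lemma seg_aux_spec x m : xs 0%N <= x ->
  [/\ (seg_aux xs x m <= m)%N, xs (seg_aux xs x m) <= x &
      forall i, (seg_aux xs x m < i <= m)%N -> x < xs i].
Proof.
move=> x0; elim: m => [|m [le_m le_x gt_x]] /=; first by split=> // -[].
case: ifP => [xm|/negbT]; first by split=> // i; lia.
rewrite -ltNge => lt_xm; split=> //; first exact: leqW.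
move=> i /andP[lt_i]; rewrite leq_eqVlt => /orP[/eqP-> //|lt_im].
by apply: gt_x; rewrite lt_i.
Qed.

Lemma seg_spec x : 0 <= x -> x <= xs J ->
  let j := seg J xs x in
  (j <= J)%N /\ (x = xs j \/ [/\ (j < J)%N, xs j < x & x <= xs j.+1]).
Proof.
move=> x_ge0 x_le /=; rewrite /seg.
have x0 : xs 0%N <= x by rewrite xs0.
have [le_J le_x gt_x] := @seg_aux_spec x J.-1 x0.
set j := seg_aux xs x J.-1 in le_J le_x gt_x *.
case: (posnP J) => [J0|J_gt0].
  have -> : j = 0%N by rewrite /j J0.
  by split=> //; left; apply/le_anti; rewrite -{1}J0 x_le xs0.
have lt_jJ : (j < J)%N by lia.
split; first exact: ltnW.
move: le_x; rewrite le_eqVlt => /orP[/eqP<-|lt_x]; [by left | right; split=> //].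
have [lt_j|ge_j] := ltnP j J.-1; first by apply/ltW/gt_x; rewrite ltnSn.
by have -> : j.+1 = J by lia.
Qed.

Lemma grid_point_outside_cell k j : (k <= J)%N -> (j < J)%N ->
  xs k <= xs j \/ xs j.+1 <= xs k.
Proof.
have xs_mono :
    {in [pred i : nat | (i <= J)%N] &, {mono xs : i i' / (i <= i')%N >-> i <= i'}}.
  apply: Order.NatMonotonyTheory.incn_inP => [i i' /= iJ i'J m /andP[_ mi']|i /= _ iJ].
    exact: leq_trans (ltnW mi') i'J.
  exact: xs_incr.
move=> kJ jJ; have [le_kj|lt_jk] := leqP k j.
  by left; rewrite xs_mono // inE ltnW.
by right; rewrite xs_mono.
Qed.

Lemma lin_interp_affine_ge0 (F : nat -> R) a m x y :
  (forall k, (k <= J)%N -> 0 <= a + F k + (xs k - x) * m) ->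
  0 <= y -> y <= xs J ->
  0 <= a + lin_interp J xs F y + (y - x) * m.
Proof.
move=> F_ge0 y_ge0 y_le; have [jJ y_cell] := @seg_spec y y_ge0 y_le.
rewrite /lin_interp; set j := seg J xs y in jJ y_cell *.
case: eqP => [->|ne_p]; first exact: F_ge0.
case: y_cell => [//|[lt_jJ lt_py le_yq]].
case: eqP => [->|_]; first exact: F_ge0.
have pq : xs j != xs j.+1 by rewrite lt_eqF ?xs_incr.
rewrite -/(cell_interp (xs j) (xs j.+1) (F j) (F j.+1) y).
have -> : forall C, a + C + (y - x) * m = C + ((a - x * m) + m * y).
  by move=> C; ring.
rewrite cell_interp_affine // cell_interp_ge0 ?xs_incr ?(ltW lt_py) //.
- by have := F_ge0 j (ltnW lt_jJ); lra.
- by have := F_ge0 j.+1 lt_jJ; lra.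
Qed.

Lemma lin_mixed_interp_ge0 (E D u : nat -> R) c k x : (k <= J)%N ->
  (forall j, u j = (E j.+1 - E j) / (xs j.+1 - xs j)) ->
  (forall j, (j <= J)%N -> 0 <= E j + c + (xs k - xs j) * D j) ->
  0 <= x -> x <= xs J ->
  0 <= lin_interp J xs E x + c + (xs k - x) * mixed_interp J xs D u x.
Proof.
move=> kJ u_def E_ge0 x_ge0 x_le; have [jJ x_cell] := @seg_spec x x_ge0 x_le.
rewrite /lin_interp /mixed_interp; set j := seg J xs x in jJ x_cell *.
case: eqP => [->|ne_p]; first exact: E_ge0.
case: x_cell => [//|[lt_jJ lt_px le_xq]].
case: eqP => [->|_]; first exact: E_ge0.
have pq : xs j != xs j.+1 by rewrite lt_eqF ?xs_incr.
rewrite -/(cell_interp (xs j) (xs j.+1) (E j) (E j.+1) x).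
rewrite -/(mixed_slope (D j) (D j.+1) (u j)) u_def.
have [ge0_p ge0_q] := mixed_slope_ends (xs_incr lt_jJ) (grid_point_outside_cell kJ lt_jJ)
  (E_ge0 j (ltnW lt_jJ)) (E_ge0 j.+1 lt_jJ).
set M := mixed_slope _ _ _ in ge0_p ge0_q *.
have -> : forall C, C + c + (xs k - x) * M = C + ((c + xs k * M) + - M * x).
  by move=> C; ring.
rewrite cell_interp_affine // cell_interp_ge0 ?xs_incr ?(ltW lt_px) //; lra.
Qed.

End Grid.

Theorem mainTheorem7 (R : realFieldType) (J N : nat) (xs : nat -> R)
  (e1 e2 v d1 d2 : nat -> nat -> R) :
  xs 0%N = 0 ->
  (forall j, (j < J)%N -> xs j < xs j.+1) ->
  (1 <= N)%N ->
  (forall j k n, (j <= J)%N -> (k <= J)%N -> (1 <= n)%N -> (n <= N - 1)%N ->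
     0 <= e1 j n + e2 k n.+1 + (xs k - xs j) * d1 j n) ->
  (forall j k n, (j <= J)%N -> (k <= J)%N -> (1 <= n)%N -> (n <= N - 1)%N ->
     0 <= e1 j n + e2 k n.+1 + (xs k - xs j) * d2 j n - v j n + v k n.+1) ->
  forall n, (1 <= n)%N -> (n <= N - 1)%N ->
  forall x y, 0 <= x -> x <= xs J -> 0 <= y -> y <= xs J ->
    0 <= lin_interp J xs (fun j => e1 j n) x + lin_interp J xs (fun j => e2 j n.+1) y
         + (y - x) * mixed_interp J xs (fun j => d1 j n) (u1 xs e1 n) x
    /\
    0 <= lin_interp J xs (fun j => e1 j n) x + lin_interp J xs (fun j => e2 j n.+1) y
         + (y - x) * mixed_interp J xs (fun j => d2 j n) (u2 xs e1 v n) x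
         - lin_interp J xs (fun j => v j n) x + lin_interp J xs (fun j => v j n.+1) y.
Proof.
move=> xs0 xs_incr _ cstr_ii cstr_iii n n_ge1 n_le x y x_ge0 x_le y_ge0 y_le.
have interp_ge0 := lin_interp_affine_ge0 xs0 xs_incr.
have mixed_ge0 := lin_mixed_interp_ge0 xs0 xs_incr.
split.
  apply: interp_ge0 => // k kJ; apply: mixed_ge0 => // j jJ.
  exact: cstr_ii.
have -> : forall a b c vx vy : R, a + b + c - vx + vy = (a - vx) + (b + vy) + c.
  by move=> *; ring.
rewrite -lin_interpB -lin_interpD.
apply: interp_ge0 => // k kJ; apply: mixed_ge0 => // j jJ.
have := cstr_iii j k n jJ kJ n_ge1 n_le; lra.
Qed.
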